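(* Let $f:M'\twoheadleftarrow M$ be a matroid quotient on a ground set $E$ with $n_f(E)=c$, and let $M'=M_0\overset{\mathcal K_1}{\twoheadleftarrow}M_1\overset{\mathcal K_2}{\twoheadleftarrow}\cdots\overset{\mathcal K_c}{\twoheadleftarrow}M_c=M$ be its Higgs factorization. Then for each $i=1,\dots,c$, \[\mathcal K_i=\{G\in\mathscr L_{M_i} : G\supseteq F \text{ for some } F\in\operatorname{cyc}(f) \text{ with } n_f(F)\ge i\}.\] In particular, the quotient $f$ (i.e. the matroid $M'$) is determined by $M$, the set $\operatorname{cyc}(f)$ of $f$-cyclic flats, and their $f$-nullities.
   Context: $M'$ is a (matroid) quotient of $M$, written $f:M'\twoheadleftarrow M$, if every flat of $M'$ is a flat of $M$. The $f$-nullity of $A\subseteq E$ is $n_f(A)=\operatorname{rk}_M(A)-\operatorname{rk}_{M'}(A)$. An $f$-cyclic flat is a flat $F$ of $M'$ that is minimal under inclusion among flats $F'$ of $M'$ with $n_f(F')=n_f(F)$; $\operatorname{cyc}(f)$ is the set of these. A modular cut $\mathcal K$ of a matroid $N$ is a nonempty upward-closed set of flats such that $F_1,F_2\in\mathcal K$ with $\operatorname{rk}(F_1)+\operatorname{rk}(F_2)=\operatorname{rk}(F_1\cup F_2)+\operatorname{rk}(F_1\cap F_2)$ implies $F_1\cap F_2\in\mathcal K$; it defines an elementary quotient $N'\overset{\mathcal K}{\twoheadleftarrow}N$ whose flats are $\mathcal K$ together with the flats of $N$ not covered by an element of $\mathcal K$. The Higgs factorization of $f$ is the sequence of elementary quotients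 in which $M_i$ ($1\le i\le c$) has bases $\{A\subseteq E: A \text{ spanning in } M',\ \text{independent in } M,\ |A|=\operatorname{rk}(M')+i\}$, and $\mathcal K_i$ is the modular cut of $M_i$ defining the elementary quotient $M_{i-1}$ of $M_i$. *)

From mathcomp Require Import all_boot.
Set Implicit Arguments. Unset Strict Implicit. Unset Printing Implicit Defensive.

Section Matroids.
Variable T : finType.

Record matroid := Matroid {
  indep : {set T} -> bool;
  indep_set0 : indep set0;
  indep_sub : forall A B : {set T}, A \subset B -> indep B -> indep A;
  indep_aug : forall A B : {set T}, indep A -> indep B -> #|A| < #|B| ->
                exists2 x, x \in B :\: A & indep (x |: A)
}.

(* Rank, flats etc. are defined for an arbitrary family I of "independent"
   sets, so that they can also be applied to families (like the Higgs
   matroids M_i) that are given by a set of bases. *)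
Definition rk (I : {set T} -> bool) (A : {set T}) : nat :=
  \max_(B : {set T} | (B \subset A) && I B) #|B|.

Definition flat (I : {set T} -> bool) (F : {set T}) : bool :=
  [forall x, (x \notin F) ==> (rk I F < rk I (x |: F))].

Definition quotient (M' M : matroid) : Prop :=
  forall F, flat (indep M') F -> flat (indep M) F.

Definition nullity (M' M : matroid) (A : {set T}) : nat :=
  rk (indep M) A - rk (indep M') A.

Definition f_cyclic (M' M : matroid) (F : {set T}) : bool :=
  flat (indep M') F &&
  ~~ [exists F' : {set T}, [&& flat (indep M') F', F' \proper F &
                             nullity M' M F' == nullity M' M F]].

Definition cyc (M' M : matroid) : {set {set T}} := [set F | f_cyclic M' M F].

Definition higgs_basis (M' M : matroid) (i : nat) (A : {set T}) : bool :=
  [&& rk (indep M') A == rk (indep M') setT, indep M A &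
      #|A| == rk (indep M') setT + i].

Definition higgs_indep (M' M : matroid) (i : nat) (A : {set T}) : bool :=
  [exists B : {set T}, (A \subset B) && higgs_basis M' M i B].

Definition modular_cut (I : {set T} -> bool) (K : {set {set T}}) : Prop :=
  [/\ K != set0,
      (forall F, F \in K -> flat I F),
      (forall F G, F \in K -> flat I G -> F \subset G -> G \in K) &
      (forall F1 F2, F1 \in K -> F2 \in K ->
         rk I F1 + rk I F2 = rk I (F1 :|: F2) + rk I (F1 :&: F2) ->
         F1 :&: F2 \in K)].

Definition covers (I : {set T} -> bool) (G F : {set T}) : bool :=
  [&& flat I F, flat I G, F \proper G &
      ~~ [exists H : {set T}, [&& flat I H, F \proper H & H \proper G]]].

Definition elem_quot_flat (I : {set T} -> bool) (K : {set {set T}})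
    (F : {set T}) : bool :=
  (F \in K) || (flat I F && ~~ [exists G in K, covers I G F]).

End Matroids.

From mathcomp Require Import all_boot zify.
Set Implicit Arguments. Unset Strict Implicit. Unset Printing Implicit Defensive.

(* The Higgs matroid M_i has rank function r_M'(A) + min(n_f(A), i): an
   M-independent subset of A of size at most r_M' + i can be grown greedily,
   since an element outside the M'-closure raises r_M' and, M' being a quotient
   of M, also r_M.  Hence going from M_i to M_(i-1) lowers the rank exactly of
   the sets of nullity at least i, and the flats of M_(i-1) are the M_i-flats
   of nullity at least i together with the M_i-flats not covered by one of
   them.  A modular cut is recovered from the flats of its elementary quotient,
   so K_i is the set of M_i-flats of nullity at least i; as every flat of M'
   contains an f-cyclic flat of the same nullity, these are the M_i-flats
   containing an f-cyclic flat of nullity at least i.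
   For the second claim, the rank functions of the Higgs matroids of two such
   quotients agree by downward induction on i: at i = c both are r_M, and
   whether n_f(A) >= i is read off from the f-cyclic flats inside the
   M_i-closure of A.  At i = 0 they are the rank functions of the quotients. *)

Section SetFunctions.
Variable T : finType.
Implicit Types A B X F G H : {set T}.

Lemma setU1_ind (P : {set T} -> Prop) :
  P set0 -> (forall x X, x \notin X -> P X -> P (x |: X)) -> forall X, P X.
Proof.
move=> P0 PU X; move cardX : #|X| => k; elim: k X cardX => [|k IH] X cardX.
  by move/eqP: cardX; rewrite cards_eq0 => /eqP ->.
have /set0Pn [x xX] : X != set0 by rewrite -cards_eq0 cardX.
rewrite -(setD1K xX); apply: PU; first by rewrite !inE eqxx.
by apply: IH; move: cardX; rewrite (cardsD1 x X) xX; lia.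
Qed.

Definition set_monotone (g : {set T} -> nat) :=
  forall A B, A \subset B -> g A <= g B.

Definition submodular (g : {set T} -> nat) :=
  forall A B, g (A :|: B) + g (A :&: B) <= g A + g B.

(* [flat I] unfolds to [gflat (rk I)], so what follows applies to flats. *)
Definition gflat (g : {set T} -> nat) F :=
  [forall x, (x \notin F) ==> (g F < g (x |: F))].

Definition gclosure (g : {set T} -> nat) A := [set x | g (x |: A) == g A].

Lemma gflatP g F : reflect (forall x, x \notin F -> g F < g (x |: F)) (gflat g F).
Proof. by apply: (iffP forallP) => gF x; apply/implyP/gF. Qed.

Section Closure.
Variable g : {set T} -> nat.
Hypothesis g_mono : set_monotone g.
Hypothesis g_submod : submodular g.

Lemma subset_gclosure A : A \subset gclosure g A.
Proof.
apply/subsetP => x xA; rewrite inE; apply/eqP; congr g.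
by apply/setUidPr; rewrite sub1set.
Qed.

Lemma gclosure_min A F : gflat g F -> A \subset F -> gclosure g A \subset F.
Proof.
move=> /gflatP gF sAF; apply/subsetP => x; rewrite inE => /eqP gxA.
apply/negPn/negP => xF; have := gF x xF; have := g_submod F (x |: A).
have -> : F :|: (x |: A) = x |: F by rewrite setUCA (setUidPl sAF).
have -> : F :&: (x |: A) = A.
  by rewrite setIUr (setIidPr sAF) disjoint_setI0 ?set0U // disjoint_sym disjoints1.
lia.
Qed.

Lemma gclosureE A : g (gclosure g A) = g A.
Proof.
suff gAX X : X \subset gclosure g A -> g (A :|: X) = g A.
  by rewrite -{1}(setUidPr (subset_gclosure A)) gAX.
elim/setU1_ind: X => [|x X _ IH] sX; first by rewrite setU0.
have /IH gAX : X \subset gclosure g A by apply: subset_trans sX; apply: subsetUr.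
have : x \in gclosure g A by rewrite (subsetP sX) // !inE eqxx.
rewrite inE => /eqP gxA; have := g_submod (A :|: X) (x |: A).
have -> : A :|: X :|: (x |: A) = A :|: (x |: X).
  by apply/setP => y; rewrite !inE; case: (y == x); case: (y \in A); case: (y \in X).
have := g_mono (subsetUl A (x |: X)).
have /g_mono : A \subset (A :|: X) :&: (x |: A) by rewrite subsetI subsetUl subsetUr.
lia.
Qed.

Lemma gclosure_gflat A : gflat g (gclosure g A).
Proof.
apply/gflatP => x; rewrite inE gclosureE neq_ltn.
have := g_mono (subsetUr [set x] A); have := g_mono (setUS [set x] (subset_gclosure A)).
by move=> ? ? /orP[]; lia.
Qed.

Lemma gflat_proper_lt F G : gflat g F -> F \proper G -> g F < g G.
Proof.
move=> /gflatP gF /properP [sFG [x xG xF]].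
by apply: leq_trans (gF x xF) (g_mono _); rewrite subUset sub1set xG sFG.
Qed.

Lemma gflatI F G : gflat g F -> gflat g G -> gflat g (F :&: G).
Proof.
move=> gF gG; suff <- : gclosure g (F :&: G) = F :&: G by apply: gclosure_gflat.
apply/eqP; rewrite eqEsubset subset_gclosure andbT subsetI.
by rewrite !gclosure_min // ?subsetIl ?subsetIr.
Qed.

End Closure.

End SetFunctions.

Section Families.
Variable T : finType.
Implicit Types A B : {set T}.
Variable I : {set T} -> bool.

Lemma rk_ge A B : B \subset A -> I B -> #|B| <= rk I A.
Proof.
by move=> sBA IB; apply: (@leq_bigmax_cond _ _ (fun B : {set T} => #|B|)); rewrite sBA.
Qed.

Hypothesis I0 : I set0.

Lemma rk_attained A : exists B, [/\ B \subset A, I B & #|B| = rk I A].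
Proof.
have [|B] := @eq_bigmax_cond _ [pred B : {set T} | (B \subset A) && I B] (fun B => #|B|).
  by apply/card_gt0P; exists set0; rewrite inE sub0set I0.
by rewrite inE => /andP[sBA IB] maxB; exists B; rewrite -maxB.
Qed.

Lemma rk_le_card A : rk I A <= #|A|.
Proof. by have [B [sBA _ <-]] := rk_attained A; apply: subset_leq_card. Qed.

Lemma rk_mono : set_monotone (rk I).
Proof.
move=> A B sAB; have [C [sCA IC <-]] := rk_attained A.
by apply: rk_ge => //; apply: subset_trans sAB.
Qed.

End Families.

Section MatroidRank.
Variable T : finType.
Implicit Types A B S X : {set T}.
Variable M : matroid T.
Notation r := (rk (indep M)).

Lemma rk0 : r set0 = 0.
Proof. by apply/eqP; rewrite -leqn0 -(cards0 T) rk_le_card ?indep_set0. Qed.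

Lemma rk_matroid_mono : set_monotone r.
Proof. exact: rk_mono (indep_set0 M). Qed.

Lemma indepE A : indep M A = (r A == #|A|).
Proof.
apply/idP/idP => [MA|/eqP rA]; first by rewrite eqn_leq rk_le_card ?indep_set0 ?rk_ge.
have [B [sBA MB cardB]] := rk_attained (indep_set0 M) A.
suff -> : A = B by [].
by apply/eqP; rewrite eq_sym eqEcard sBA cardB rA leqnn.
Qed.

Lemma rk_setU1 A x : r (x |: A) <= r A + 1.
Proof.
have [B [sBxA MB <-]] := rk_attained (indep_set0 M) (x |: A).
have sBA : B :\ x \subset A by rewrite subDset.
have := rk_ge sBA (indep_sub (subsetDl B [set x]) MB).
by rewrite (cardsD1 x B); case: (x \in B) => /=; lia.
Qed.

Lemma rk_setU1_neq A x : r (x |: A) != r A -> r (x |: A) = r A + 1.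
Proof.
have := rk_setU1 A x; have := rk_matroid_mono (subsetUr [set x] A).
by rewrite neq_ltn => ? ? /orP[]; lia.
Qed.

Lemma indep_augment S X : indep M S -> S \subset X -> #|S| < r X ->
  exists2 y, y \in X :\: S & indep M (y |: S).
Proof.
move=> MS sSX ltSX; have [B [sBX MB cardB]] := rk_attained (indep_set0 M) X.
rewrite -cardB in ltSX; have [y] := indep_aug MS MB ltSX.
move=> yBS MyS; exists y => //.
by move: yBS; rewrite !inE => /andP[-> /(subsetP sBX) ->].
Qed.

Lemma indep_extend S X : indep M S -> S \subset X ->
  exists S', [/\ S \subset S', S' \subset X, indep M S' & #|S'| = r X].
Proof.
move=> MS sSX; move def_k : (r X - #|S|) => k.
elim: k S MS sSX def_k => [|k IH] S MS sSX def_k.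
  by exists S; split => //; apply/eqP; rewrite eqn_leq rk_ge //=; lia.
have [|y] := indep_augment MS sSX; first lia.
rewrite inE => /andP[yS yX] MyS.
have [||S' [sS' ? ? ?]] := IH (y |: S) MyS.
- by rewrite subUset sub1set yX.
- by rewrite cardsU1 yS; lia.
- by exists S'; split => //; apply: subset_trans sS'; apply: subsetUr.
Qed.

Lemma rk_submodular : submodular r.
Proof.
move=> A B; have [C [sCAB MC cardC]] := rk_attained (indep_set0 M) (A :&: B).
have sAB : A :&: B \subset A :|: B by apply: subset_trans (subsetIl _ _) (subsetUl _ _).
have [D [sCD sDAB MD cardD]] := indep_extend MC (subset_trans sCAB sAB).
have rA := rk_ge (subsetIl A D) (indep_sub (subsetIr A D) MD).
have rB := rk_ge (subsetIl B D) (indep_sub (subsetIr B D) MD).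
have : C \subset (A :&: D) :&: (B :&: D).
  by rewrite setIACA setIid subsetI sCAB.
move/subset_leq_card; have := cardsUI (A :&: D) (B :&: D).
by rewrite -setIUl (setIidPr sDAB); lia.
Qed.

End MatroidRank.

Section Quotient.
Variable T : finType.
Implicit Types A B X : {set T}.
Variables M' M : matroid T.
Hypothesis quotMM : quotient M' M.
Notation r := (rk (indep M)).
Notation r' := (rk (indep M')).
Notation n := (nullity M' M).

Lemma quotient_rk_setU1_eq A x : r (x |: A) = r A -> r' (x |: A) = r' A.
Proof.
move=> rxA; have : flat (indep M) (gclosure r' A).
  exact/quotMM/gclosure_gflat/rk_submodular/rk_matroid_mono.
move/gclosure_min => /(_ (rk_submodular M) A (subset_gclosure r' A)) /subsetP /(_ x).
by rewrite !inE rxA eqxx => /(_ isT) /eqP.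
Qed.

Lemma quotient_rk_setU1 A x : r' (x |: A) + r A <= r (x |: A) + r' A.
Proof.
have [rxA | ] := eqVneq (r (x |: A)) (r A).
  by rewrite (quotient_rk_setU1_eq rxA) rxA addnC.
move/rk_setU1_neq; have := rk_setU1 M' A x; lia.
Qed.

Lemma quotient_rk_sub A B : A \subset B -> r' B + r A <= r B + r' A.
Proof.
move=> sAB; rewrite -(setUidPr sAB).
elim/setU1_ind: B {sAB} => [|x X _ IH]; first by rewrite setU0; lia.
by have := quotient_rk_setU1 (A :|: X) x; rewrite setUCA; lia.
Qed.

Lemma quotient_rk_le A : r' A <= r A.
Proof. by have := quotient_rk_sub (sub0set A); rewrite !rk0; lia. Qed.

Lemma nullity_mono : set_monotone n.
Proof.
move=> A B /quotient_rk_sub; have := quotient_rk_le A; have := quotient_rk_le B.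
rewrite /nullity; lia.
Qed.

End Quotient.

Definition higgs_rk (T : finType) (M' M : matroid T) (i : nat) (A : {set T}) :=
  rk (indep M') A + minn (nullity M' M A) i.

Section HiggsRank.
Variable T : finType.
Implicit Types A B : {set T}.
Variables M' M : matroid T.
Hypothesis quotMM : quotient M' M.
Notation r := (rk (indep M)).
Notation n := (nullity M' M).

Lemma higgs_rk_mono i : set_monotone (higgs_rk M' M i).
Proof.
move=> A B sAB; have := rk_matroid_mono M' sAB; have := nullity_mono quotMM sAB.
rewrite /higgs_rk; lia.
Qed.

Lemma higgs_rk_setU1 i A x : higgs_rk M' M i (x |: A) <= higgs_rk M' M i A + 1.
Proof.
have := rk_setU1 M' A x; have := rk_setU1 M A x.
have := quotient_rk_le quotMM A; have := quotient_rk_le quotMM (x |: A).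
rewrite /higgs_rk /nullity; lia.
Qed.

Lemma higgs_rk_submodular i : submodular (higgs_rk M' M i).
Proof.
(* [higgs_rk M' M i] is min(r, r' + i); the mixed case
   r' (A :|: B) + r (A :&: B) <= r A + r' B follows from the submodularity
   of r' and [quotient_rk_sub] applied to A :&: B \subset A. *)
move=> A B; rewrite /higgs_rk /nullity.
have := rk_submodular M' A B; have := rk_submodular M A B.
have := quotient_rk_sub quotMM (subsetIl A B); have := quotient_rk_sub quotMM (subsetIr A B).
have := quotient_rk_sub quotMM (subsetUl A B); have := quotient_rk_sub quotMM (subsetUr A B).
have := quotient_rk_le quotMM A; have := quotient_rk_le quotMM B.
have := quotient_rk_le quotMM (A :|: B); have := quotient_rk_le quotMM (A :&: B).
lia.
Qed.

Lemma nullity_higgs_closure i A :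
  i <= n (gclosure (higgs_rk M' M i) A) -> i <= n A.
Proof.
have := gclosureE (higgs_rk_mono i) (higgs_rk_submodular i) A.
have := rk_matroid_mono M' (subset_gclosure (higgs_rk M' M i) A).
rewrite /higgs_rk; lia.
Qed.

Lemma higgs_rk_top A : higgs_rk M' M (n setT) A = r A.
Proof.
have := nullity_mono quotMM (subsetT A); have := quotient_rk_le quotMM A.
rewrite /higgs_rk /nullity; lia.
Qed.

Section PredecessorFlats.
Variables (i : nat) (F : {set T}).
Hypothesis i_gt0 : 0 < i.
Notation g := (higgs_rk M' M i).
Notation g' := (higgs_rk M' M i.-1).

Lemma higgs_rk_pred A : g' A = g A - (i <= n A).
Proof. by move: i_gt0; rewrite /higgs_rk; case: leqP; lia. Qed.

Lemma higgs_flat_pred : gflat g' F -> gflat g F.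
Proof.
move=> /gflatP flatF; apply/gflatP => x xF; have := flatF x xF.
have := nullity_mono quotMM (subsetUr [set x] F); rewrite !higgs_rk_pred.
case: (leqP i (n F)); case: (leqP i (n (x |: F))); lia.
Qed.

Lemma higgs_flat_pred_ge : gflat g F -> i <= n F -> gflat g' F.
Proof.
move=> /gflatP flatF nF; apply/gflatP => x xF; have := flatF x xF.
have : i <= g F by rewrite /higgs_rk; lia.
have := nullity_mono quotMM (subsetUr [set x] F); rewrite !higgs_rk_pred nF.
case: (leqP i (n (x |: F))); lia.
Qed.

Lemma higgs_flat_pred_lt : gflat g F -> n F < i ->
  gflat g' F = [forall x, (x \notin F) ==> (n (x |: F) < i)].
Proof.
move=> /gflatP flatF nF; apply: eq_forallb => x; apply: implyb_id2l => xF.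
have := flatF x xF; have := higgs_rk_setU1 i F x; rewrite !higgs_rk_pred.
rewrite (leqNgt i (n F)) nF /=; case: (leqP i (n (x |: F))); lia.
Qed.

End PredecessorFlats.

End HiggsRank.

Section HiggsMatroid.
Variable T : finType.
Implicit Types A B S : {set T}.
Variables M' M : matroid T.
Hypothesis quotMM : quotient M' M.
Notation r := (rk (indep M)).
Notation r' := (rk (indep M')).
Notation n := (nullity M' M).
Variable i : nat.
Notation I := (higgs_indep M' M i).

Lemma higgs_indep_augment A S :
  S \subset A -> indep M S -> #|S| <= r' S + i -> #|S| < minn (r A) (r' A + i) ->
  exists y, [/\ y \in A :\: S, indep M (y |: S) & #|y |: S| <= r' (y |: S) + i].
Proof.
move=> sSA MS cardS; rewrite leq_min => /andP[ltSrA ltSr'A].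
have r'_setU1 y : r' S <= r' (y |: S) by apply: rk_matroid_mono; apply: subsetUr.
have [sAcl | /subsetPn [y yA]] := boolP (A \subset gclosure r' S).
  have r'A : r' A <= r' S.
    by rewrite -(gclosureE (rk_matroid_mono M') (rk_submodular M') S) rk_matroid_mono.
  have [y yAS MyS] := indep_augment MS sSA ltSrA.
  exists y; split => //; move: yAS; rewrite inE => /andP[yS _].
  by rewrite cardsU1 yS; have := r'_setU1 y; lia.
rewrite inE => r'yS; have yS : y \notin S.
  by apply: contra r'yS => yS; rewrite (setUidPr _) // sub1set.
have ryS : r (y |: S) != r S by apply: contra r'yS => /eqP /(quotient_rk_setU1_eq quotMM) ->.
have rS : r S = #|S| by apply/eqP; rewrite -indepE.
move/rk_setU1_neq: ryS => ryS; have := rk_setU1 M' S y; have := r'_setU1 y.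
exists y; rewrite inE yS yA indepE cardsU1 yS ryS rS /=; split => //; lia.
Qed.

Lemma higgs_indep_extend A S : S \subset A -> indep M S -> #|S| <= r' S + i ->
  exists S', [/\ S \subset S', S' \subset A, indep M S', #|S'| <= r' S' + i &
                 #|S'| = minn (r A) (r' A + i)].
Proof.
move def_k : (minn (r A) (r' A + i) - #|S|) => k.
elim: k S def_k => [|k IH] S def_k sSA MS cardS.
  exists S; split => //; have := rk_ge sSA MS; have := rk_matroid_mono M' sSA; lia.
have [|y [yAS MyS cardyS]] := higgs_indep_augment sSA MS cardS; first lia.
move: yAS; rewrite inE => /andP[yS yA].
have [||S' [sS' *]] := IH (y |: S) _ _ MyS cardyS.
- by rewrite cardsU1 yS; lia.
- by rewrite subUset sub1set yA.
- by exists S'; split => //; apply: subset_trans sS'; apply: subsetUr.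
Qed.

Hypothesis i_le_c : i <= n setT.

Lemma higgs_indepE B : I B = indep M B && (#|B| <= r' B + i).
Proof.
apply/existsP/andP => [[S /andP[sBS /and3P[/eqP r'S MS /eqP cardS]]] | [MB cardB]].
  split; first exact: indep_sub sBS MS.
  (* #|S :\: B| >= r' (S :\: B) >= r' S - r' B by submodularity, and r' S = r' setT. *)
  have := rk_submodular M' B (S :\: B).
  rewrite setDE setUIr setUCr setIT (setUidPr sBS) -setDE.
  have := rk_le_card (indep_set0 M') (S :\: B); rewrite (cardsDS sBS).
  have := subset_leq_card sBS; have := rk_matroid_mono M' (subsetT B); lia.
have [S [sBS _ MS cardS cardSmin]] := higgs_indep_extend (subsetT B) MB cardB.
exists S; rewrite sBS /higgs_basis MS /=.
have := rk_matroid_mono M' (subsetT S); have := quotient_rk_le quotMM setT.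
move: i_le_c; rewrite /nullity => ? ? ?; apply/andP; split; apply/eqP; lia.
Qed.

Lemma rk_higgs A : rk I A = higgs_rk M' M i A.
Proof.
have := quotient_rk_le quotMM A; rewrite /higgs_rk /nullity => r'A.
apply/eqP; rewrite eqn_leq; apply/andP; split.
  apply/bigmax_leqP => B /andP[sBA]; rewrite higgs_indepE => /andP[MB cardB].
  have := rk_ge sBA MB; have := rk_matroid_mono M' sBA; lia.
have -> : r' A + minn (r A - r' A) i = minn (r A) (r' A + i) by lia.
have [|S [_ sSA MS cardS <-]] := higgs_indep_extend (sub0set A) (indep_set0 M).
  by rewrite cards0.
by apply: rk_ge sSA _; rewrite higgs_indepE MS cardS.
Qed.

Lemma flat_higgsE F : flat I F = gflat (higgs_rk M' M i) F.
Proof. by apply: eq_forallb => x; rewrite !rk_higgs. Qed.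

Lemma gclosure_higgs A : gclosure (rk I) A = gclosure (higgs_rk M' M i) A.
Proof. by apply/setP => x; rewrite !inE !rk_higgs. Qed.

Lemma rk_higgs_mono : set_monotone (rk I).
Proof. by move=> A B sAB; rewrite !rk_higgs higgs_rk_mono. Qed.

Lemma rk_higgs_submodular : submodular (rk I).
Proof. by move=> A B; rewrite !rk_higgs higgs_rk_submodular. Qed.

Lemma rk_higgs_setU1 A x : rk I (x |: A) <= rk I A + 1.
Proof. by rewrite !rk_higgs higgs_rk_setU1. Qed.

End HiggsMatroid.

Section CyclicFlats.
Variable T : finType.
Implicit Types A F G : {set T}.
Variables M' M : matroid T.
Hypothesis quotMM : quotient M' M.
Notation n := (nullity M' M).

Lemma flat_contains_cyc G : flat (indep M') G ->
  exists F, [/\ F \in cyc M' M, F \subset G & n F = n G].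
Proof.
move: {2}#|G| (leqnn #|G|) => k; elim: k G => [|k IH] G.
  rewrite leqn0 cards_eq0 => /eqP -> flat0; exists set0; split => //.
  rewrite inE /f_cyclic flat0 /=; apply/existsP => -[F /and3P[_ /properP[_ [x]]]].
  by rewrite inE.
move=> cardG flatG; have [cycG | ] := boolP (f_cyclic M' M G).
  by exists G; rewrite inE.
rewrite /f_cyclic flatG negbK => /existsP [F /and3P [flatF ltFG /eqP nF]].
have [|F0 [cycF0 sF0F nF0]] := IH F _ flatF.
  by move: ltFG; rewrite properEcard => /andP[_]; lia.
by exists F0; split => //; [apply: subset_trans sF0F (proper_sub ltFG) | rewrite nF0 nF].
Qed.

Lemma flat_of_higgs_flat i G :
  gflat (higgs_rk M' M i) G -> i <= n G -> flat (indep M') G.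
Proof.
move=> /gflatP higgsG nG; apply/gflatP => x xG; have := higgsG x xG.
have := nullity_mono quotMM (subsetUr [set x] G); rewrite /higgs_rk; lia.
Qed.

Lemma higgs_flat_nullityE i G : gflat (higgs_rk M' M i) G ->
  (i <= n G) = [exists F in cyc M' M, (i <= n F) && (F \subset G)].
Proof.
move=> higgsG; apply/idP/existsP => [nG | [F /and3P [_ nF sFG]]].
  have [F [cycF sFG nF]] := flat_contains_cyc (flat_of_higgs_flat higgsG nG).
  by exists F; rewrite cycF sFG nF nG.
exact: leq_trans nF (nullity_mono quotMM sFG).
Qed.

Lemma nullity_ge_cycE i A : (i <= n A) =
  [exists F in cyc M' M, (i <= n F) && (F \subset gclosure (higgs_rk M' M i) A)].
Proof.
rewrite -higgs_flat_nullityE; last first.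
  exact: gclosure_gflat (higgs_rk_mono quotMM i) (higgs_rk_submodular quotMM i) A.
apply/idP/idP => [nA | ]; last exact: nullity_higgs_closure.
exact: leq_trans nA (nullity_mono quotMM (subset_gclosure _ A)).
Qed.

End CyclicFlats.

Section ElementaryQuotient.
Variable T : finType.
Implicit Types A F G H : {set T}.
Variable I : {set T} -> bool.

Lemma flat_setT : flat I setT.
Proof. by apply/forallP => x; rewrite inE. Qed.

Lemma exists_cover F : flat I F -> F != setT -> exists G, covers I G F.
Proof.
move=> flatF FnT; suff cover_below k G : #|G| <= k -> flat I G -> F \proper G ->
    exists G, covers I G F.
  by apply: (cover_below _ setT (leqnn _) flat_setT); rewrite properT.
elim: k G => [|k IH] G cardG flatG ltFG.
  by move: ltFG; rewrite properEcard => /andP[_]; lia.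
have [coverG | notcoverG] := boolP (covers I G F); first by exists G.
have /existsP [H /and3P [flatH ltFH ltHG]] :
    [exists H, [&& flat I H, F \proper H & H \proper G]].
  by move: notcoverG; rewrite /covers flatF flatG ltFG negbK.
by apply: (IH H _ flatH ltFH); move: ltHG cardG; rewrite properEcard => /andP[_]; lia.
Qed.

Lemma elem_quot_flat_subset (K1 K2 : {set {set T}}) :
  (forall F, F \in K1 -> flat I F) ->
  (forall F G, F \in K1 -> flat I G -> F \subset G -> G \in K1) ->
  setT \in K2 ->
  elem_quot_flat I K1 =1 elem_quot_flat I K2 ->
  K1 \subset K2.
Proof.
move=> flatK1 upK1 K2T sameK; apply/subsetP => F.
move: {2}#|~: F| (leqnn #|~: F|) => k; elim: k F => [|k IH] F cardF FK1.
  by move: cardF; rewrite leqn0 cards_eq0 => /eqP FC0; rewrite -(setCK F) FC0 setC0.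
apply/negPn/negP => FnK2; have FnT : F != setT by apply: contraNneq FnK2 => ->.
have [G coverGF] := exists_cover (flatK1 _ FK1) FnT.
have /and4P [_ flatG ltFG _] := coverGF.
have GK1 : G \in K1 by apply: upK1 FK1 flatG (proper_sub ltFG).
have GK2 : G \in K2.
  apply: IH GK1; move: ltFG; rewrite properEcard => /andP[_].
  by have := cardsC F; have := cardsC G; lia.
have := sameK F; rewrite /elem_quot_flat FK1 (negbTE FnK2) /=.
have -> : [exists G in K2, covers I G F] by apply/existsP; exists G; rewrite GK2.
by rewrite andbF.
Qed.

Section Covers.
Hypothesis rk_monoI : set_monotone (rk I).
Hypothesis rk_submodularI : submodular (rk I).
Hypothesis rk_setU1I : forall A x, rk I (x |: A) <= rk I A + 1.

Lemma flat_gclosure A : flat I (gclosure (rk I) A).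
Proof. exact: gclosure_gflat. Qed.

Lemma proper_gclosure_setU1 F x : x \notin F -> F \proper gclosure (rk I) (x |: F).
Proof.
move=> xF; have sxFC := subset_gclosure (rk I) (x |: F).
apply/properP; split; first by apply: subset_trans sxFC; apply: subsetUr.
by exists x => //; apply: (subsetP sxFC); rewrite setU11.
Qed.

Lemma covers_gclosure_setU1 F x :
  flat I F -> x \notin F -> covers I (gclosure (rk I) (x |: F)) F.
Proof.
move=> flatF xF; rewrite /covers flatF flat_gclosure proper_gclosure_setU1 //=.
apply/existsP => -[H /and3P [flatH ltFH ltHC]].
have := gflat_proper_lt rk_monoI flatF ltFH; have := gflat_proper_lt rk_monoI flatH ltHC.
by rewrite gclosureE //; have := rk_setU1I F x; lia.
Qed.

Lemma gclosure_setU1_cover F G x :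
  covers I G F -> x \in G -> x \notin F -> gclosure (rk I) (x |: F) = G.
Proof.
move=> /and4P [flatF flatG ltFG noH] xG xF.
have sCG : gclosure (rk I) (x |: F) \subset G.
  by rewrite gclosure_min // subUset sub1set xG proper_sub.
apply/eqP; rewrite eqEsubset sCG /=; apply: contraNT noH => sGC.
apply/existsP; exists (gclosure (rk I) (x |: F)).
by rewrite flat_gclosure proper_gclosure_setU1 // properE sCG.
Qed.

End Covers.

End ElementaryQuotient.

Definition higgs_cut (T : finType) (M' M : matroid T) (i : nat) : {set {set T}} :=
  [set G | flat (higgs_indep M' M i) G & i <= nullity M' M G].

Section HiggsCut.
Variable T : finType.
Implicit Types F G : {set T}.
Variables M' M : matroid T.
Hypothesis quotMM : quotient M' M.
Notation n := (nullity M' M).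
Variable i : nat.
Hypothesis i_gt0 : 0 < i.
Hypothesis i_le_c : i <= n setT.
Notation I := (higgs_indep M' M i).
Notation J := (higgs_indep M' M i.-1).
Notation K := (higgs_cut M' M i).

Let pred_i_le_c : i.-1 <= n setT. Proof. exact: leq_trans (leq_pred i) i_le_c. Qed.
Let rkI_mono : set_monotone (rk I) := rk_higgs_mono quotMM i_le_c.
Let rkI_submodular : submodular (rk I) := rk_higgs_submodular quotMM i_le_c.
Let rkI_setU1 := rk_higgs_setU1 quotMM i_le_c.

Lemma higgs_cutE :
  [set G | flat I G && [exists F in cyc M' M, (i <= n F) && (F \subset G)]] = K.
Proof.
apply/setP => G; rewrite !inE; have [flatG | //] := boolP (flat I G).
by rewrite (higgs_flat_nullityE quotMM) // -(flat_higgsE quotMM i_le_c).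
Qed.

Lemma higgs_cut_up F G : F \in K -> flat I G -> F \subset G -> G \in K.
Proof.
rewrite !inE => /andP[_ nF] -> sFG.
exact: leq_trans nF (nullity_mono quotMM sFG).
Qed.

Lemma modular_cut_higgs_cut : modular_cut I K.
Proof.
split.
- by apply/set0Pn; exists setT; rewrite inE flat_setT.
- by move=> F; rewrite inE => /andP[].
- exact: higgs_cut_up.
move=> F1 F2; rewrite !inE => /andP[flatF1 nF1] /andP[flatF2 nF2].
have -> : flat I (F1 :&: F2) := gflatI rkI_mono rkI_submodular flatF1 flatF2.
rewrite !(rk_higgs quotMM i_le_c) /higgs_rk.
have := rk_submodular M' F1 F2; have := nullity_mono quotMM (subsetUl F1 F2); lia.
Qed.

Lemma elem_quot_flat_higgs_cut F : elem_quot_flat I K F = flat J F.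
Proof.
rewrite /elem_quot_flat inE (flat_higgsE quotMM pred_i_le_c).
have [flatF | nflatF] /= := boolP (flat I F); last first.
  apply/esym/negbTE; apply: contra nflatF => /(higgs_flat_pred quotMM i_gt0).
  by rewrite (flat_higgsE quotMM i_le_c).
move: (flatF); rewrite (flat_higgsE quotMM i_le_c) => gflatF.
have [nF | nF] /= := leqP i (n F); first by rewrite higgs_flat_pred_ge.
rewrite higgs_flat_pred_lt //; apply/idP/forallP => [noCover x | small].
  apply/implyP => xF; rewrite ltnNge; apply: contra noCover => nxF.
  set C := gclosure (rk I) (x |: F).
  have CK : C \in K.
    rewrite inE flat_gclosure //=.
    exact: leq_trans nxF (nullity_mono quotMM (subset_gclosure _ _)).
  by apply/existsP; exists C; rewrite CK covers_gclosure_setU1.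
apply/existsP => -[G /andP[]]; rewrite inE => /andP[_ nG] coverGF.
have /and4P[_ _ /properP[_ [x xG xF]] _] := coverGF.
have := implyP (small x) xF; rewrite ltnNge => /negP; apply.
apply: (nullity_higgs_closure quotMM); rewrite -gclosure_higgs //.
by rewrite (gclosure_setU1_cover rkI_mono rkI_submodular coverGF).
Qed.

Lemma higgs_modular_cutE (K' : {set {set T}}) :
  modular_cut I K' /\ elem_quot_flat I K' =1 flat J <-> K' = K.
Proof.
split=> [[[K'0 flatK' upK' _] quotK'] | ->]; last first.
  by split; [exact: modular_cut_higgs_cut | exact: elem_quot_flat_higgs_cut].
have sameK : elem_quot_flat I K' =1 elem_quot_flat I K.
  by move=> F; rewrite quotK' elem_quot_flat_higgs_cut.
have flatK F : F \in K -> flat I F by rewrite inE => /andP[].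
have K'T : setT \in K'.
  by have /set0Pn [F FK'] := K'0; exact: upK' FK' (flat_setT _) (subsetT F).
apply/eqP; rewrite eqEsubset (elem_quot_flat_subset flatK' upK' _ sameK) ?inE ?flat_setT //.
by apply: (elem_quot_flat_subset flatK higgs_cut_up K'T) => F; rewrite sameK.
Qed.

End HiggsCut.

Section Determination.
Variable T : finType.
Implicit Types A F : {set T}.
Variables N' M' M : matroid T.
Hypothesis quotNM : quotient N' M.
Hypothesis quotMM : quotient M' M.
Hypothesis same_cyc : cyc N' M = cyc M' M.
Hypothesis same_nullity : {in cyc M' M, nullity N' M =1 nullity M' M}.
Notation c := (nullity M' M setT).

Lemma same_nullity_setT : nullity N' M setT = c.
Proof.
have [F [cycF _ nF]] := flat_contains_cyc M (flat_setT (indep M')).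
have [F' [cycF' _ nF']] := flat_contains_cyc M (flat_setT (indep N')).
have := nullity_mono quotNM (subsetT F); have := nullity_mono quotMM (subsetT F').
rewrite -same_nullity // in nF; rewrite same_cyc in cycF'; rewrite same_nullity // in nF'.
lia.
Qed.

Lemma higgs_rk_pred_same i : 0 < i ->
  higgs_rk N' M i =1 higgs_rk M' M i -> higgs_rk N' M i.-1 =1 higgs_rk M' M i.-1.
Proof.
move=> i_gt0 same_i A.
have same_ge : (i <= nullity N' M A) = (i <= nullity M' M A).
  rewrite (nullity_ge_cycE quotNM) (nullity_ge_cycE quotMM) same_cyc.
  have -> : gclosure (higgs_rk N' M i) A = gclosure (higgs_rk M' M i) A.
    by apply/setP => x; rewrite !inE !same_i.
  by apply: eq_existsb => F; case: (boolP (F \in cyc M' M)) => //= /same_nullity ->.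
by rewrite !higgs_rk_pred // same_i same_ge.
Qed.

Lemma higgs_rk_same i : i <= c -> higgs_rk N' M i =1 higgs_rk M' M i.
Proof.
move def_k : (c - i) => k; elim: k i def_k => [|k IH] i def_k i_le_c A.
  have -> : i = c by lia.
  by rewrite -{1}same_nullity_setT !higgs_rk_top.
have -> : i = i.+1.-1 by [].
by apply: higgs_rk_pred_same => //; apply: IH; lia.
Qed.

Lemma indep_eq_of_same_cyc A : indep N' A = indep M' A.
Proof.
have := higgs_rk_same (leq0n c) A.
by rewrite /higgs_rk !minn0 !addn0 => same_rk; rewrite !indepE same_rk.
Qed.

End Determination.

Theorem proposition3p23 (T : finType) (M' M : matroid T) (c : nat) :
  quotient M' M ->
  nullity M' M setT = c ->
  (forall i : nat, 1 <= i <= c ->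
     forall K : {set {set T}},
       (modular_cut (higgs_indep M' M i) K /\
        (forall F : {set T},
           elem_quot_flat (higgs_indep M' M i) K F =
           flat (higgs_indep M' M i.-1) F))
       <->
       K = [set G : {set T} | flat (higgs_indep M' M i) G &&
              [exists F in cyc M' M, (i <= nullity M' M F) && (F \subset G)]])
  /\
  (forall N' : matroid T, quotient N' M ->
     cyc N' M = cyc M' M ->
     (forall F, F \in cyc M' M -> nullity N' M F = nullity M' M F) ->
     forall A : {set T}, indep N' A = indep M' A).
Proof.
move=> quotMM <-; split=> [i /andP[i_gt0 i_le_c] K | N' quotNM same_cyc same_nullity A].
  by rewrite higgs_cutE //; apply: higgs_modular_cutE.
exact: indep_eq_of_same_cyc quotNM quotMM same_cyc same_nullity A.
Qed.
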